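(* Let $n\ge 1$ and let $p$ be any probability distribution on $\{0,1\}^n$ with support $\operatorname{supp}(p)=\{v: p(v)>0\}$. Let $k$ be the minimal number of pairs $\{u,u'\}\subseteq\{0,1\}^n$, where in each pair the vectors $u,u'$ differ in exactly one entry, such that $\operatorname{supp}(p)$ is contained in the union of these pairs. Then $p$ can be approximated arbitrarily well by the visible marginal distribution of an RBM with $n$ visible units and $k-1$ hidden units; that is, for every $\varepsilon>0$ there exist parameters $W,B,C$ of such an RBM whose visible marginal $q$ satisfies $D(p\,\|\,q)<\varepsilon$.
   Context: A Restricted Boltzmann Machine (RBM) with $n$ visible units and $m$ hidden units has parameters $W\in\mathbb{R}^{m\times n}$, $B\in\mathbb{R}^n$, $C\in\mathbb{R}^m$, and defines the joint distribution $p(v,h)=\frac{1}{Z}\exp(h^T W v + B\cdot v + C\cdot h)$ on $(v,h)\in\{0,1\}^n\times\{0,1\}^m$, where $Z$ is the normalizing constant; its visible marginal distribution is $q(v)=\sum_{h\in\{0,1\}^m}p(v,h)$. For $m=0$ this is $q(v)\propto\exp(B\cdot v)$. $D(p\|q)=\sum_v p(v)\log\frac{p(v)}{q(v)}$ denotes the Kullback–Leibler divergence. *)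

From HB Require Import structures.
From mathcomp Require Import all_boot all_order all_algebra.
From mathcomp Require Import reals.
From mathcomp Require Import sequences exp.
Set Implicit Arguments. Unset Strict Implicit. Unset Printing Implicit Defensive.
Import Order.TTheory GRing.Theory Num.Theory.
Local Open Scope ring_scope.

Definition state (n : nat) := {ffun 'I_n -> bool}.

Definition b2R {R : realType} (b : bool) : R := (b : nat)%:R.

Section RBM.
Variables (R : realType) (n m : nat).

Definition rbm_energy (W : 'M[R]_(m, n)) (B : 'rV[R]_n) (C : 'rV[R]_m)
  (v : state n) (h : state m) : R :=
  \sum_(i < m) \sum_(j < n) b2R (h i) * W i j * b2R (v j)
  + \sum_(j < n) B 0 j * b2R (v j) + \sum_(i < m) C 0 i * b2R (h i).

Definition rbm_Z W B C : R :=
  \sum_(v : state n) \sum_(h : state m) expR (rbm_energy W B C v h).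

Definition rbm_marginal W B C (v : state n) : R :=
  (\sum_(h : state m) expR (rbm_energy W B C v h)) / rbm_Z W B C.

End RBM.

Definition is_distribution {R : realType} {T : finType} (p : T -> R) : Prop :=
  (forall x, 0 <= p x) /\ \sum_x p x = 1.

Definition KL {R : realType} {T : finType} (p q : T -> R) : R :=
  \sum_(x | 0 < p x) p x * ln (p x / q x).

Definition adjacent (n : nat) (u u' : state n) : bool :=
  #|[set i | u i != u' i]| == 1%N.

Definition edge_cover {R : realType} (n : nat) (p : state n -> R) (k : nat) : Prop :=
  exists s : seq (state n * state n),
    [/\ size s = k,
        all (fun e => adjacent e.1 e.2) s &
        forall v, 0 < p v -> exists2 e, e \in s & (v == e.1) || (v == e.2)].

From Pilot Require Import Defs.
From HB Require Import structures.
From mathcomp Require Import all_boot all_order all_algebra.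
From mathcomp Require Import reals.
From mathcomp Require Import sequences exp.
From mathcomp Require Import ring lra.
Set Implicit Arguments. Unset Strict Implicit. Unset Printing Implicit Defensive.
Import Order.TTheory GRing.Theory Num.Theory.
Local Open Scope ring_scope.

(* Up to normalisation, the visible marginal of an RBM with m hidden units is a product of
   experts exp (s_0 v) * prod_i (1 + exp (s_i v)) whose exponents are separable,
   s_i v = sum_j phi_i j (v j).  For an edge {a, b} whose endpoints differ in coordinate c, a
   separable exponent can take arbitrary values at a and b and be arbitrarily negative
   everywhere else.  So exp s_0 matches p near the first edge of a cover, and every further
   edge costs one more factor, which raises the mass at its endpoints by prescribed amounts
   while multiplying the mass elsewhere by at most 1 + eta.  The result g dominates p on its
   support and has total mass at most 1 + delta, hence D(p || g / sum g) <= ln (1 + delta). *)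

Lemma adjacentP n (a b : state n) : Defs.adjacent a b ->
  exists2 c, a c != b c & forall j, j != c -> a j = b j.
Proof.
move/cards1P=> [c Hc]; exists c => [|j jc].
  by have := set11 c; rewrite -Hc inE.
by apply/eqP; apply: contraNT jc => abj; rewrite -in_set1 -Hc inE.
Qed.

Lemma adjacent_neq n (a b : state n) : Defs.adjacent a b -> a != b.
Proof. by case/adjacentP=> c abc _; apply: contraNneq abc => ->. Qed.

Lemma adjacent_off_pair n (a b v : state n) c :
  a c != b c -> (forall j, j != c -> a j = b j) -> v != a -> v != b ->
  exists2 j, j != c & v j != a j.
Proof.
move=> abc Hab va vb; apply/exists_inP; apply: contraNT va.
rewrite negb_exists_in => /forall_inP Hv.
have off j : j != c -> v j = a j by move=> jc; apply/eqP; rewrite -[_ == _]negbK Hv.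
case: (boolP (v c == a c)) => [/eqP vac|vac].
  by apply/eqP/ffunP => j; have [->|/off] := eqVneq j c.
exfalso; move/negP: vb; apply; apply/eqP/ffunP => j.
have [->|jc] := eqVneq j c; last by rewrite off // Hab.
by move: vac abc; case: (v c); case: (a c); case: (b c).
Qed.

Section ProductOfExperts.
Variable R : realType.

Definition sep_sum n (phi : 'I_n -> bool -> R) (v : state n) : R :=
  \sum_(j < n) phi j (v j).

Definition product_of_experts n m (f : state n -> R) : Prop :=
  exists (phi0 : 'I_n -> bool -> R) (phi : 'I_m -> 'I_n -> bool -> R),
  forall v, f v = expR (sep_sum phi0 v) * \prod_(i < m) (1 + expR (sep_sum (phi i) v)).

Lemma product_of_experts_gt0 n m (f : state n -> R) :
  product_of_experts m f -> forall v, 0 < f v.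
Proof.
case=> phi0 [phi Hf] v; rewrite Hf mulr_gt0 ?expR_gt0 //.
by apply: prodr_gt0 => i _; rewrite ltr_wpDr ?expR_ge0.
Qed.

Lemma product_of_experts_sum_gt0 n m (f : state n -> R) :
  product_of_experts m f -> 0 < \sum_v f v.
Proof.
move/product_of_experts_gt0=> f0.
by rewrite (bigD1 [ffun=> false]) //= ltr_wpDr ?f0 ?sumr_ge0 // => v _; rewrite ltW.
Qed.

Lemma sep_sumE n (phi : 'I_n -> bool -> R) v :
  sep_sum phi v = \sum_j phi j false + \sum_j (phi j true - phi j false) * b2R (v j).
Proof.
rewrite /sep_sum -big_split; apply: eq_bigr => j _.
by case: (v j); rewrite /b2R /= ?mulr1 ?mulr0 ?addr0 // addrC subrK.
Qed.

Lemma sum_state_prod_expR m (A : 'I_m -> R) :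
  \sum_(h : state m) \prod_(i < m) expR (b2R (h i) * A i) = \prod_(i < m) (1 + expR (A i)).
Proof.
rewrite -(bigA_distr_bigA (fun i (b : bool) => expR (b2R b * A i))) /=.
by apply: eq_bigr => i _; rewrite big_bool /b2R /= mul1r mul0r expR0 addrC.
Qed.

(* The hidden units sum out independently: a unit with weights [w] and bias [c]
   contributes the factor [1 + exp (w.v + c)] to the unnormalised marginal. *)
Lemma product_of_experts_rbm n m (f : state n -> R) : product_of_experts m f ->
  exists (W : 'M[R]_(m, n)) (B : 'rV[R]_n) (C : 'rV[R]_m),
  forall v, rbm_marginal W B C v = f v / \sum_u f u.
Proof.
case=> phi0 [phi Hf].
pose W := \matrix_(i < m, j < n) (phi i j true - phi i j false).
pose B := \row_(j < n) (phi0 j true - phi0 j false).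
pose C := \row_(i < m) \sum_(j < n) phi i j false.
pose kap := \sum_(j < n) phi0 j false.
have unnormalised v : \sum_(h : state m) expR (rbm_energy W B C v h) = expR (- kap) * f v.
  rewrite Hf mulrA -expRD.
  have -> : - kap + sep_sum phi0 v = \sum_j B 0 j * b2R (v j).
    by rewrite sep_sumE addKr; apply: eq_bigr => j _; rewrite mxE.
  rewrite -sum_state_prod_expR mulr_sumr; apply: eq_bigr => h _.
  rewrite /rbm_energy -expR_sum -expRD [in LHS]addrAC [in LHS]addrC.
  congr (expR (_ + _)).
  rewrite -big_split /=; apply: eq_bigr => i _.
  rewrite sep_sumE mulrDr addrC; congr (_ + _).
    by rewrite mxE mulrC.
  by rewrite mulr_sumr; apply: eq_bigr => j _; rewrite mxE mulrA.
exists W, B, C => v.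
rewrite /rbm_marginal /rbm_Z unnormalised.
under eq_bigr do rewrite unnormalised.
by rewrite -mulr_sumr invfM mulrACA mulfV ?mul1r // gt_eqF ?expR_gt0.
Qed.

Lemma sep_sum_spike n (a b : state n) (al be M : R) : Defs.adjacent a b ->
  exists phi : 'I_n -> bool -> R,
    [/\ sep_sum phi a = al, sep_sum phi b = be &
        forall v, v != a -> v != b -> sep_sum phi v <= M].
Proof.
case/adjacentP=> c abc Hab.
(* Any [v] other than [a], [b] also disagrees with [a] off [c], which costs [S]. *)
pose S := `|al| + `|be| + `|M|.
exists (fun j x => if j == c then (if x == a c then al else be)
                   else (if x == a j then 0 else - S)); split.
- by rewrite /sep_sum (bigD1 c) //= !eqxx big1 ?addr0 // => j /negbTE ->; rewrite eqxx.
- rewrite /sep_sum (bigD1 c) //= eqxx eq_sym (negbTE abc) big1 ?addr0 // => j jc.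
  by rewrite (negbTE jc) Hab // eqxx.
move=> v va vb; have [j jc vj] := adjacent_off_pair abc Hab va vb.
rewrite /sep_sum (bigD1 c) //= (bigD1 j) //= eqxx (negbTE jc) (negbTE vj).
set rest := \sum_(i < n | _) _; set at_c := if _ then al else be.
have rest_le0 : rest <= 0.
  apply: sumr_le0 => i /andP [/negbTE -> _]; case: ifP => // _.
  by rewrite oppr_le0 !addr_ge0.
have at_c_le : at_c <= `|al| + `|be|.
  by rewrite /at_c; case: ifP => _; [rewrite ler_wpDr // ler_norm | rewrite ler_wpDl // ler_norm].
have := ler_norm (- M); rewrite normrN /S; lra.
Qed.

Lemma expR_sep_sum_spike n (a b : state n) (ta tb eta : R) : Defs.adjacent a b ->
  0 < ta -> 0 < tb -> 0 < eta ->
  exists phi : 'I_n -> bool -> R,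
    [/\ expR (sep_sum phi a) = ta, expR (sep_sum phi b) = tb &
        forall v, v != a -> v != b -> expR (sep_sum phi v) <= eta].
Proof.
move=> ab ta0 tb0 eta0.
have [phi [Ha Hb Hv]] := sep_sum_spike (ln ta) (ln tb) (ln eta) ab.
exists phi; rewrite Ha Hb !lnK ?posrE //; split=> // v va vb.
by rewrite -(lnK eta0) ler_expR Hv.
Qed.

Lemma sum_le_pair (T : finType) (g h : T -> R) (a b : T) (x y : R) : a != b ->
  g a <= h a + x -> g b <= h b + y -> (forall v, v != a -> v != b -> g v <= h v) ->
  \sum_v g v <= \sum_v h v + x + y.
Proof.
move=> ab ga gb gv.
apply: (@le_trans _ _ (\sum_v (h v + (if v == a then x else 0) + (if v == b then y else 0)))).
  apply: ler_sum => v _; have [->|va] := eqVneq v a; first by rewrite (negbTE ab) addr0.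
  by have [->|vb] := eqVneq v b; rewrite ?addr0 // gv.
by rewrite !big_split /= -!big_mkcond /= !big_pred1_eq.
Qed.

Lemma sum_off_pair_le (T : finType) (p : T -> R) (a b : T) : a != b ->
  \sum_v (if (v == a) || (v == b) then 0 else p v) + p a + p b <= \sum_v p v.
Proof.
move=> ab; suff : \sum_v (if (v == a) || (v == b) then 0 else p v) <= \sum_v p v - p a - p b.
  by lra.
apply: (sum_le_pair ab); rewrite ?eqxx ?orbT ?subrr //.
by move=> v /negbTE -> /negbTE ->.
Qed.

Lemma product_of_experts_spike n (a b : state n) (ta tb eta : R) : Defs.adjacent a b ->
  0 < ta -> 0 < tb -> 0 < eta ->
  exists g, [/\ product_of_experts 0 g, g a = ta, g b = tb & \sum_v g v <= ta + tb + eta].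
Proof.
move=> ab ta0 tb0 eta0.
pose N : R := #|{: state n}|%:R.
have N0 : 0 < N by rewrite ltr0n; apply/card_gt0P; exists a.
have [psi [Ha Hb Hv]] := expR_sep_sum_spike ab ta0 tb0 (divr_gt0 eta0 N0).
exists (fun v => expR (sep_sum psi v)); split=> //.
  by exists psi, (fun=> psi) => v; rewrite big_ord0 mulr1.
have spread : \sum_(v : state n) eta / N = eta by rewrite sumr_const -mulr_natr divfK ?gt_eqF.
rewrite -[eta]spread addrC addrA; apply: (sum_le_pair (adjacent_neq ab)).
- by rewrite Ha lerDr ltW ?divr_gt0.
- by rewrite Hb lerDr ltW ?divr_gt0.
- exact: Hv.
Qed.

Lemma product_of_experts_boost n m (f : state n -> R) (a b : state n) (ta tb eta : R) :
  product_of_experts m f -> Defs.adjacent a b -> 0 < ta -> 0 < tb -> 0 < eta ->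
  exists g, [/\ product_of_experts m.+1 g, ta <= g a, tb <= g b,
    forall v, f v <= g v & \sum_v g v <= \sum_v f v + ta + tb + eta].
Proof.
move=> Pf ab ta0 tb0 eta0.
have f0 := product_of_experts_gt0 Pf.
have S0 := product_of_experts_sum_gt0 Pf.
have [psi [Ha Hb Hv]] :=
  expR_sep_sum_spike ab (divr_gt0 ta0 (f0 a)) (divr_gt0 tb0 (f0 b)) (divr_gt0 eta0 S0).
have boosted v t : expR (sep_sum psi v) = t / f v -> f v * (1 + expR (sep_sum psi v)) = f v + t.
  by move=> ->; rewrite mulrDr mulr1 mulrCA divff ?mulr1 // gt_eqF ?f0.
have {Ha}ga := boosted _ _ Ha; have {Hb}gb := boosted _ _ Hb.
exists (fun v => f v * (1 + expR (sep_sum psi v))); split.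
- case: Pf => phi0 [phi Hf].
  exists phi0, (fun i => if unlift ord0 i is Some i' then phi i' else psi) => v.
  rewrite big_ord_recl unlift_none Hf.
  under [X in _ = _ * (_ * X)]eq_bigr do rewrite liftK.
  by rewrite -mulrA [X in _ * X]mulrC.
- by rewrite ga lerDr ltW ?f0.
- by rewrite gb lerDr ltW ?f0.
- by move=> v; rewrite ler_pMr ?f0 // lerDl expR_ge0.
have -> : \sum_v f v + ta + tb + eta = \sum_v (f v * (1 + eta / \sum_u f u)) + ta + tb.
  by rewrite -mulr_suml mulrDr mulr1 mulrCA divff ?mulr1 ?gt_eqF //; lra.
apply: (sum_le_pair (adjacent_neq ab)).
- by rewrite ga lerD2r ler_pMr ?f0 // lerDl ltW ?divr_gt0.
- by rewrite gb lerD2r ler_pMr ?f0 // lerDl ltW ?divr_gt0.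
- by move=> v va vb; rewrite ler_pM2l ?f0 // lerD2l Hv.
Qed.

Lemma product_of_experts_cover n (e : state n * state n) (s : seq (state n * state n))
    (p : state n -> R) (delta : R) :
  (forall v, 0 <= p v) -> all (fun e => Defs.adjacent e.1 e.2) (e :: s) ->
  (forall v, 0 < p v -> exists2 e', e' \in e :: s & (v == e'.1) || (v == e'.2)) ->
  0 < delta ->
  exists g, [/\ product_of_experts (size s) g,
    forall v, 0 < p v -> p v <= g v & \sum_v g v <= \sum_v p v + delta].
Proof.
elim: s e p delta => [|e' s IH] [a b] p delta p0 /= /andP [ab adj_s] cov delta0;
  pose d := delta / 4; have d0 : 0 < d by rewrite divr_gt0.
all: have pd v : 0 < p v + d by rewrite ltr_wpDl.
- have [g [Pg ga gb Sg]] := product_of_experts_spike ab (pd a) (pd b) d0.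
  exists g; split=> // [v /cov [e'] | ].
    by rewrite inE => /eqP -> /orP [] /eqP ->; rewrite ?ga ?gb lerDl ltW.
  have := sum_off_pair_le p (adjacent_neq ab).
  have : 0 <= \sum_v (if (v == a) || (v == b) then 0 else p v).
    by apply: sumr_ge0 => v _; case: ifP.
  by move: Sg; rewrite /d; lra.
pose p' v := if (v == a) || (v == b) then 0 else p v.
have p'0 v : 0 <= p' v by rewrite /p'; case: ifP.
have cov' v : 0 < p' v -> exists2 e'', e'' \in e' :: s & (v == e''.1) || (v == e''.2).
  rewrite /p'; case: ifPn => [_|vab /cov [e''] ]; first by rewrite ltxx.
  by rewrite inE => /orP [/eqP -> /= | ]; [rewrite (negbTE vab) | exists e''].
have [f [Pf fp Sf]] := IH e' p' d p'0 adj_s cov' d0.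
have [g [Pg ga gb fg Sg]] := product_of_experts_boost Pf ab (pd a) (pd b) d0.
exists g; split=> // [v pv | ].
  have [-> | va] := eqVneq v a; first by apply: le_trans ga; rewrite lerDl ltW.
  have [-> | vb] := eqVneq v b; first by apply: le_trans gb; rewrite lerDl ltW.
  have p'v : p' v = p v by rewrite /p' (negbTE va) (negbTE vb).
  by apply: le_trans (fg v); rewrite -p'v fp // p'v.
have := sum_off_pair_le p (adjacent_neq ab).
by move: Sg Sf; rewrite /d /p'; lra.
Qed.

Lemma KL_le_ln (T : finType) (p q : T -> R) (r : R) : is_distribution p ->
  (forall x, 0 < p x -> 0 < q x) -> (forall x, 0 < p x -> p x <= r * q x) ->
  KL p q <= ln r.
Proof.
case=> p0 p1 q0 pq.
have -> : ln r = \sum_(x | 0 < p x) p x * ln r.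
  rewrite -mulr_suml -[LHS]mul1r; congr (_ * _).
  rewrite [RHS]big_mkcond -p1; apply: eq_bigr => x _.
  by case: ifPn => // px; apply/eqP; rewrite eq_le p0 andbT leNgt.
apply: ler_sum => x px; rewrite ler_wpM2l ?p0 //.
have r0 : 0 < r by rewrite -(pmulr_lgt0 _ (q0 x px)); apply: lt_le_trans (pq x px).
by rewrite ler_ln ?posrE ?divr_gt0 ?q0 // ler_pdivrMr ?q0 // pq.
Qed.

End ProductOfExperts.

Theorem theorem1 (R : realType) (n : nat) (p : state n -> R) (k : nat) :
  (1 <= n)%N ->
  is_distribution p ->
  edge_cover p k ->
  (forall k', edge_cover p k' -> (k <= k')%N) ->
  forall eps : R, 0 < eps ->
  exists (W : 'M[R]_(k.-1, n)) (B : 'rV[R]_n) (C : 'rV[R]_(k.-1)),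
    KL p (rbm_marginal W B C) < eps.
Proof.
move=> _ [p0 p1] [s [<- adj cov]] _ eps eps0.
have [v0 pv0] : exists v, 0 < p v.
  apply/existsP; apply: contraT; rewrite negb_exists => /forallP p_le0.
  have : \sum_v p v <= 0 by apply: sumr_le0 => v _; rewrite leNgt p_le0.
  by rewrite p1 ler10.
case: s adj cov => [|e s] adj cov; first by have [] := cov v0 pv0.
pose delta := expR (eps / 2) - 1.
have delta0 : 0 < delta by rewrite subr_gt0 expR_gt1 divr_gt0.
have [g [Pg pg Sg]] := product_of_experts_cover p0 adj cov delta0.
have [W [B [C Hq]]] := product_of_experts_rbm Pg.
have G0 := product_of_experts_sum_gt0 Pg.
exists W, B, C; apply: (@le_lt_trans _ _ (ln (\sum_u g u))).
  apply: KL_le_ln => // v pv; rewrite Hq ?divr_gt0 ?(product_of_experts_gt0 Pg) //.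
  by rewrite mulrCA divff ?mulr1 ?gt_eqF ?pg.
apply: (@le_lt_trans _ _ (eps / 2)); last by rewrite ltr_pdivrMr // ltr_pMr // ltr1n.
by rewrite -[X in _ <= X]expRK ler_ln ?posrE ?expR_gt0 // -[expR _](subrK 1) -/delta -p1 addrC.
Qed.
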